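(* Let $n=3$. For a $3\times3$ signature matrix $\varepsilon$, an $\varepsilon$-$\mathrm{SL}_2$-tiling of $\mathbb{Z}^3$ exists if and only if $\varepsilon_{12}\varepsilon_{13}\varepsilon_{23}=-1$; in particular there are exactly $4$ signature matrices $\varepsilon$ for which an $\varepsilon$-$\mathrm{SL}_2$-tiling of $\mathbb{Z}^3$ exists. For each such $\varepsilon$ the $\varepsilon$-$\mathrm{SL}_2$-tiling is unique up to translation, i.e. any two $\varepsilon$-$\mathrm{SL}_2$-tilings $(a_{\mathbf{i}})$, $(b_{\mathbf{i}})$ satisfy $b_{\mathbf{i}}=a_{\mathbf{i}+\mathbf{t}}$ for all $\mathbf{i}$ for some fixed $\mathbf{t}\in\mathbb{Z}^3$.
   Context: Write $\mathbf{i}=(i_1,\dots,i_n)\in\mathbb{Z}^n$ and $\mathbf{e}_k$ for the $k$-th standard unit vector. A signature matrix is a symmetric $n\times n$ matrix $\varepsilon=(\varepsilon_{k\ell})$ with $\varepsilon_{k\ell}\in\{1,-1\}$ for $k\ne\ell$ and $\varepsilon_{kk}=-1$. Given a signature matrix $\varepsilon$, an array $(a_{\mathbf{i}})_{\mathbf{i}\in\mathbb{Z}^n}$ with all $a_{\mathbf{i}}\in\mathbb{Z}_{>0}$ is an $\varepsilon$-$\mathrm{SL}_2$-tiling of $\mathbb{Z}^n$ if for all $\mathbf{i}\in\mathbb{Z}^n$ and all $k\ne\ell$: $a_{\mathbf{i}+\mathbf{e}_\ell}a_{\mathbf{i}+\mathbf{e}_k}-a_{\mathbf{i}}a_{\mathbf{i}+\mathbf{e}_k+\mathbf{e}_\ell}=\varepsilon_{k\ell}$.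 *)

(* Z^n is modelled as integer row vectors 'rV[int]_n;
   indices 1..n of the paper are the ordinals 0..n-1. *)
From HB Require Import structures.
From mathcomp Require Import all_boot all_order all_algebra.
Set Implicit Arguments. Unset Strict Implicit. Unset Printing Implicit Defensive.
Import Order.TTheory GRing.Theory Num.Theory.
Local Open Scope ring_scope.

Definition unitv (n : nat) (k : 'I_n) : 'rV[int]_n := delta_mx 0 k.

Definition is_signature (n : nat) (eps : 'M[int]_n) : Prop :=
  eps^T = eps /\
  (forall k l : 'I_n, k != l -> eps k l = 1 \/ eps k l = -1) /\
  (forall k : 'I_n, eps k k = -1).

Definition is_SL2_tiling (n : nat) (eps : 'M[int]_n) (a : 'rV[int]_n -> int) : Prop :=
  (forall i, 0 < a i) /\
  (forall (i : 'rV[int]_n) (k l : 'I_n), k != l ->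
     a (i + unitv l) * a (i + unitv k) - a i * a (i + unitv k + unitv l) = eps k l).

From HB Require Import structures.
From mathcomp Require Import all_boot all_order all_algebra.
From mathcomp Require Import zify ring.
From Stdlib Require Import Classical.
Set Implicit Arguments. Unset Strict Implicit. Unset Printing Implicit Defensive.
Import Order.TTheory GRing.Theory Num.Theory.
Local Open Scope ring_scope.

(* Comparing the frieze relations on the faces of a unit cube shows that a step along e_l
   can be traded for a step along +e_k or -e_k, the sign being eps_km * eps_lm.  Hence in
   dimension 3 a tiling is a function g of the single linear form
   i_1 + eps_13 eps_23 i_2 + eps_12 eps_23 i_3, where the positive integer sequence g
   satisfies g(t-1) g(t+1) = g(t)^2 - eps_12 eps_13 eps_23.  At a minimum of g the sign +1
   is impossible, and the sign -1 forces two consecutive values 1, which determine g up to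
   translation.  Conversely, the odd-indexed Fibonacci numbers give such a g. *)

Definition frieze_line (c : int) (g : int -> int) : Prop :=
  (forall t, 0 < g t) /\ forall t, g (t - 1) * g (t + 1) = g t ^+ 2 + c.

Lemma ex_argmin_nneg (T : Type) (g : T -> int) (x : T) :
  (forall t, 0 <= g t) -> exists t0, forall t, g t0 <= g t.
Proof.
move=> g_ge0.
suff bounded_min n : forall t, g t <= n%:Z -> exists t0, forall s, g t0 <= g s.
  by apply: (bounded_min (absz (g x)) x); rewrite abszE; exact: ler_norm.
elim: n => [|n IHn] t le_gt_n.
  by exists t => s; have := g_ge0 s; lia.
have [[s le_gs_n]|no_lower] := classic (exists s, g s <= n%:Z); first exact: IHn s le_gs_n.
exists t => s; have : ~ g s <= n%:Z by move=> ?; apply: no_lower; exists s.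
lia.
Qed.

Lemma pos_mul_eq1 (x y : int) : 0 < x -> x * y = 1 -> x = 1.
Proof. move=> x_gt0 xy1; have : 0 < y by rewrite -(pmulr_rgt0 _ x_gt0) xy1. nia. Qed.

Section FriezeLine.
Variables (c : int) (g : int -> int).
Hypothesis gF : frieze_line c g.

Lemma frieze_line_shift s : frieze_line c (fun t => g (t + s)).
Proof.
split=> [t|t]; first exact: gF.1.
by rewrite addrAC [t + 1 + s]addrAC gF.2.
Qed.

Lemma frieze_line_min : exists t0, forall t, g t0 <= g t.
Proof. by apply: (@ex_argmin_nneg _ g 0) => t; apply: ltW; exact: gF.1. Qed.

Lemma frieze_line_const_ge0 : 0 <= c.
Proof.
have [t0 min_t0] := frieze_line_min; have g_ge0 t := ltW (gF.1 t).
have := ler_pM (g_ge0 _) (g_ge0 _) (min_t0 (t0 - 1)) (min_t0 (t0 + 1)).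
by rewrite gF.2 expr2 lerDl.
Qed.

Lemma frieze_line1_ones : c = 1 -> exists m, g m = 1 /\ g (m + 1) = 1.
Proof.
move=> c1; have [t0 min_t0] := frieze_line_min; have rec := gF.2 t0.
rewrite c1 in rec; have g0_gt0 := gF.1 t0.
have [e|ne] := eqVneq (g (t0 - 1)) (g t0).
  have g0_1 : g t0 = 1.
    apply: (@pos_mul_eq1 _ (g (t0 + 1) - g t0)) => //.
    by move: rec; rewrite e mulrBr -expr2 => ->; ring.
  by exists (t0 - 1); rewrite subrK e.
have [e'|ne'] := eqVneq (g (t0 + 1)) (g t0).
  have g0_1 : g t0 = 1.
    apply: (@pos_mul_eq1 _ (g (t0 - 1) - g t0)) => //.
    by move: rec; rewrite e' mulrC mulrBr -expr2 => ->; ring.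
  by exists t0; rewrite e'.
have lt_l : g t0 + 1 <= g (t0 - 1) by have := min_t0 (t0 - 1); lia.
have lt_r : g t0 + 1 <= g (t0 + 1) by have := min_t0 (t0 + 1); lia.
have := ler_pM (ltW (addr_gt0 g0_gt0 ltr01)) (ltW (addr_gt0 g0_gt0 ltr01)) lt_l lt_r.
by rewrite rec; lia.
Qed.

End FriezeLine.

Lemma frieze_line_eq c g h m : frieze_line c g -> frieze_line c h ->
  g m = h m -> g (m + 1) = h (m + 1) -> g =1 h.
Proof.
move=> [g_gt0 g_rec] [h_gt0 h_rec] e0 e1.
pose Q u := g u = h u /\ g (u + 1) = h (u + 1).
have Q_succ u : Q u -> Q (u + 1).
  move=> [eu eu1]; split=> //; apply: (mulfI (lt0r_neq0 (g_gt0 u))).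
  by move: (g_rec (u + 1)) (h_rec (u + 1)); rewrite addrK eu eu1 => -> ->.
have Q_pred u : Q u -> Q (u - 1).
  move=> [eu eu1]; rewrite /Q subrK; split=> //.
  apply: (mulIf (lt0r_neq0 (g_gt0 (u + 1)))).
  by rewrite {2}eu1 g_rec h_rec eu.
suff Q_all d : Q (m + d) by move=> t; have [] := Q_all (t - m); rewrite addrC subrK.
elim/int_rect: d => [|n IH|n IH]; first by rewrite addr0.
- by rewrite intS (addrC 1) addrA; exact: Q_succ.
- by rewrite (_ : m - _ = m - n%:Z - 1) ?intS; [exact: Q_pred | ring].
Qed.

Lemma frieze_line1_shift g h : frieze_line 1 g -> frieze_line 1 h ->
  exists s, forall t, h t = g (t + s).
Proof.
move=> gF hF.
have [m [g0 g1]] := frieze_line1_ones gF erefl.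
have [m' [h0 h1]] := frieze_line1_ones hF erefl.
exists (m - m'); apply: (frieze_line_eq hF (frieze_line_shift gF _) (m := m')).
- by rewrite h0 addrC subrK g0.
- by rewrite h1 (_ : m' + 1 + _ = m + 1) ?g1 //; ring.
Qed.

(* [odd_fib n] is the Fibonacci number F_(2n-1): 1, 1, 2, 5, 13, ... *)
Fixpoint odd_fib (n : nat) : int :=
  match n with
  | 0%N | 1%N => 1
  | (m.+1 as k).+1 => 3 * odd_fib k - odd_fib m
  end.

Lemma odd_fibSS n : odd_fib n.+2 = 3 * odd_fib n.+1 - odd_fib n.
Proof. by []. Qed.

Lemma odd_fib_gt0 n : 0 < odd_fib n.
Proof.
suff mono m : 1 <= odd_fib m <= odd_fib m.+1 by have /andP[] := mono n; lia.
by elim: m => [|m IH] //; rewrite odd_fibSS; lia.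
Qed.

Lemma odd_fib_rec n : odd_fib n * odd_fib n.+2 = odd_fib n.+1 ^+ 2 + 1.
Proof.
suff cassini m : odd_fib m.+1 ^+ 2 - 3 * odd_fib m.+1 * odd_fib m + odd_fib m ^+ 2 = -1.
  by have := cassini n; rewrite odd_fibSS !expr2; lia.
by elim: m => [|m IH] //; rewrite -IH odd_fibSS; ring.
Qed.

(* Symmetric about 1/2: [frieze1 (1 - t) = frieze1 t]. *)
Definition frieze1 (t : int) : int :=
  match t with Posz n => odd_fib n | Negz n => odd_fib n.+2 end.

Lemma frieze_line_frieze1 : frieze_line 1 frieze1.
Proof.
split=> [[n|n]|[[|n]|[|n]]].
- exact: odd_fib_gt0.
- exact: odd_fib_gt0.
- by [].
- have -> : n.+1%:Z - 1 = n by lia.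
  have -> : n.+1%:Z + 1 = n.+2 by lia.
  exact: odd_fib_rec.
- by [].
- have -> : Negz n.+1 - 1 = Negz n.+2 by rewrite !NegzE; lia.
  have -> : Negz n.+1 + 1 = Negz n by rewrite !NegzE; lia.
  by rewrite mulrC; exact: odd_fib_rec.
Qed.

(* [x_S] is the value of a tiling at [i + sum_(s in S) e_s]; the four hypotheses are the
   frieze relations on the faces of the unit cube at [i] that contain an edge along [e_m]. *)
Lemma cube_identity (x xk xl xm xkl xkm xlm xklm ekm elm : int) : x != 0 ->
  x * xkm = xk * xm - ekm -> x * xlm = xl * xm - elm ->
  xk * xklm = xkl * xkm - elm -> xl * xklm = xkl * xlm - ekm ->
  xkl * (elm * xk - ekm * xl) = x * (elm * xl - ekm * xk).
Proof.
move=> x_neq0 r_km r_lm r_k_lm r_l_km; apply: (mulfI x_neq0); apply/eqP.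
rewrite -subr_eq0.
have -> : x * (xkl * (elm * xk - ekm * xl)) - x * (x * (elm * xl - ekm * xk)) =
    x * xk * xkl * (x * xlm - (xl * xm - elm)) - x * xl * xkl * (x * xkm - (xk * xm - ekm))
    - x ^+ 2 * (xl * (xk * xklm - (xkl * xkm - elm)) - xk * (xl * xklm - (xkl * xlm - ekm))).
  by ring.
by rewrite r_km r_lm r_k_lm r_l_km !subrr !mulr0 !subrr.
Qed.

Lemma addr_scale_invariant (V : lmodType int) (T : Type) (f : V -> T) (v : V) :
  (forall x, f (x + v) = f x) -> forall x (c : int), f (x + c *: v) = f x.
Proof.
move=> f_inv x; elim/int_rect=> [|m IHm|m IHm]; first by rewrite scale0r addr0.
  by rewrite intS scalerDl scale1r addrCA addrC f_inv.
rewrite -IHm -f_inv; congr f.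
by rewrite intS opprD scalerDl scaleN1r addrAC -addrA addNKr.
Qed.

Section Tiling.
Variables (n : nat) (eps : 'M[int]_n) (a : 'rV[int]_n -> int).
Hypotheses (eps_sig : is_signature eps) (a_tiling : is_SL2_tiling eps a).

Lemma signature_sym k l : eps l k = eps k l.
Proof. by rewrite -{1}eps_sig.1 mxE. Qed.

Lemma signature_sqr k l : k != l -> eps k l * eps k l = 1.
Proof. by move=> /(eps_sig.2.1 k l) [] ->. Qed.

Lemma tiling_cube i k l m : k != m -> l != m ->
  (eps k m = eps l m -> a (i + unitv k) = a (i + unitv l)) /\
  (eps k m = - eps l m -> a (i + unitv k + unitv l) = a i).
Proof.
move=> km lm; have [a_gt0 face] := a_tiling.
have key : a (i + unitv k + unitv l) * (eps l m * a (i + unitv k) - eps k m * a (i + unitv l))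
    = a i * (eps l m * a (i + unitv l) - eps k m * a (i + unitv k)).
  apply: (cube_identity (xm := a (i + unitv m)) (xkm := a (i + unitv k + unitv m))
    (xlm := a (i + unitv l + unitv m)) (xklm := a (i + unitv k + unitv l + unitv m))).
  - exact: lt0r_neq0.
  - by have := face i k m km; lia.
  - by have := face i l m lm; lia.
  - by have := face (i + unitv k) l m lm; lia.
  - have := face (i + unitv l) k m km.
    by rewrite (addrAC i (unitv l) (unitv k)) => <-; ring.
have elm_neq0 : eps l m != 0 by apply/eqP => e0; have := signature_sqr lm; rewrite e0 mul0r.
split=> e.
- have : (a (i + unitv k) - a (i + unitv l)) * (eps l m * (a (i + unitv k + unitv l) + a i)) == 0.
    rewrite e in key; apply/eqP; transitivity (a (i + unitv k + unitv l) *
      (eps l m * a (i + unitv k) - eps l m * a (i + unitv l)) -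
      a i * (eps l m * a (i + unitv l) - eps l m * a (i + unitv k))); first ring.
    by rewrite key subrr.
  by rewrite !mulf_eq0 (negbTE elm_neq0) (gt_eqF (addr_gt0 (a_gt0 _) (a_gt0 _))) !orbF
    subr_eq0 => /eqP.
- have ne0 : eps l m * (a (i + unitv k) + a (i + unitv l)) != 0.
    by rewrite mulf_neq0 // gt_eqF // addr_gt0.
  apply: (mulIf ne0) => /=.
  rewrite e in key; transitivity (a (i + unitv k + unitv l) *
    (eps l m * a (i + unitv k) - - eps l m * a (i + unitv l))); first ring.
  by rewrite key; ring.
Qed.

Lemma tiling_shift k l m i : k != m -> l != m ->
  a (i + unitv l) = a (i + (eps k m * eps l m) *: unitv k).
Proof.
move=> km lm; have lm2 := signature_sqr lm.
have [e|e] : eps k m = eps l m \/ eps k m = - eps l m.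
  by case: (eps_sig.2.1 k m km) (eps_sig.2.1 l m lm) => -> [] ->; auto.
- by rewrite e lm2 scale1r; apply/esym/(tiling_cube i km lm).1.
- rewrite e mulNr lm2 scaleN1r.
  by have := (tiling_cube (i - unitv k) km lm).2 e; rewrite subrK.
Qed.

Lemma tiling_periodic k l m i (c : int) : k != m -> l != m ->
  a (i + c *: ((eps k m * eps l m) *: unitv k - unitv l)) = a i.
Proof.
move=> km lm; apply: (addr_scale_invariant (f := a)) => j.
by rewrite -{2}(subrK (unitv l) j) (tiling_shift _ km lm) addrA addrAC.
Qed.

Lemma tiling_line_frieze k l (s : int) : k != l -> s = 1 \/ s = -1 ->
  (forall j, a (j + unitv l) = a (j + s *: unitv k)) ->
  frieze_line (- (s * eps k l)) (fun t => a (t *: unitv k)).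
Proof.
move=> kl s_pm shift; have [a_gt0 face] := a_tiling; split=> // t.
have scaleS u : u *: unitv k + unitv k = (u + 1) *: unitv k by rewrite scalerDl scale1r.
case: s_pm => s_val; rewrite s_val in shift *.
- have := face ((t - 1) *: unitv k) k l kl.
  by rewrite !shift scale1r !scaleS subrK => <-; ring.
- have := face (t *: unitv k) k l kl.
  by rewrite !shift scaleN1r addrK scaleS scalerBl scale1r => <-; ring.
Qed.

End Tiling.

Lemma frieze_line1_face g t (u v : int) : frieze_line 1 g ->
  u = 1 \/ u = -1 -> v = 1 \/ v = -1 ->
  g (t + v) * g (t + u) - g t * g (t + u + v) = - (u * v).
Proof.
move=> [_ rec] /= [] -> [] ->.
- by have := rec (t + 1); rewrite addrK => ->; ring.
- by rewrite addrK rec; ring.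
- by rewrite addrNK mulrC rec; ring.
- by rewrite [g t * _]mulrC; have := rec (t - 1); rewrite subrK => ->; ring.
Qed.

Lemma frieze_line1_tiling n (eps : 'M[int]_n) g (L : 'rV[int]_n -> int) :
  frieze_line 1 g -> {morph L : i j / i + j} ->
  (forall k, L (unitv k) = 1 \/ L (unitv k) = -1) ->
  (forall k l, k != l -> eps k l = - (L (unitv k) * L (unitv l))) ->
  is_SL2_tiling eps (g \o L).
Proof.
move=> gF L_add L_pm eps_L; split=> [i|i k l kl] /=; first exact: gF.1.
by rewrite !L_add eps_L // frieze_line1_face.
Qed.

Definition o0 : 'I_3 := @Ordinal 3 0 isT.
Definition o1 : 'I_3 := @Ordinal 3 1 isT.
Definition o2 : 'I_3 := @Ordinal 3 2 isT.

Lemma ord3P (k : 'I_3) : [\/ k = o0, k = o1 | k = o2].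
Proof.
by case: k => [[|[|[|//]]] ?]; [constructor 1|constructor 2|constructor 3]; apply: val_inj.
Qed.

Definition form3 (eps : 'M[int]_3) (i : 'rV[int]_3) : int :=
  i 0 o0 + eps o0 o2 * eps o1 o2 * i 0 o1 + eps o0 o1 * eps o1 o2 * i 0 o2.

Lemma form3D eps : {morph form3 eps : i j / i + j}.
Proof. by move=> i j; rewrite /form3 !mxE; ring. Qed.

Lemma form3_unitv0 eps (t : int) i : form3 eps (i + t *: unitv o0) = form3 eps i + t.
Proof. by rewrite /form3 /unitv !mxE /=; ring. Qed.

Section Tiling3.
Variables (eps : 'M[int]_3) (a : 'rV[int]_3 -> int).
Hypotheses (eps_sig : is_signature eps) (a_tiling : is_SL2_tiling eps a).

Lemma tiling3_factor i : a i = a (form3 eps i *: unitv o0).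
Proof.
rewrite -(tiling_periodic eps_sig a_tiling (k := o0) (l := o1) (m := o2) i (i 0 o1)) //.
rewrite -(tiling_periodic eps_sig a_tiling (k := o0) (l := o2) (m := o1) _ (i 0 o2)) //.
rewrite (signature_sym eps_sig o1 o2); congr a.
by apply/rowP => j; rewrite /form3 /unitv !mxE; case: (ord3P j) => ->; rewrite /= ?mxE; ring.
Qed.

Lemma tiling3_line_frieze :
  frieze_line (- (eps o0 o1 * eps o0 o2 * eps o1 o2)) (fun t => a (t *: unitv o0)).
Proof.
have shift j := tiling_shift eps_sig a_tiling (k := o0) (l := o1) (m := o2) j isT isT.
have s_pm : eps o0 o2 * eps o1 o2 = 1 \/ eps o0 o2 * eps o1 o2 = -1.
  by case: (eps_sig.2.1 o0 o2 isT) (eps_sig.2.1 o1 o2 isT) => -> [] ->; auto.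
have := tiling_line_frieze a_tiling (k := o0) (l := o1) isT s_pm shift.
by rewrite [_ * eps o0 o1]mulrC mulrA.
Qed.

Lemma tiling3_sign : eps o0 o1 * eps o0 o2 * eps o1 o2 = -1.
Proof.
have := frieze_line_const_ge0 tiling3_line_frieze.
by case: (eps_sig.2.1 o0 o1 isT) (eps_sig.2.1 o0 o2 isT) (eps_sig.2.1 o1 o2 isT)
  => -> [] -> [] ->.
Qed.

End Tiling3.

Lemma tiling3_unique (eps : 'M[int]_3) (a b : 'rV[int]_3 -> int) : is_signature eps ->
  is_SL2_tiling eps a -> is_SL2_tiling eps b -> exists t, forall i, b i = a (i + t).
Proof.
move=> eps_sig aT bT.
have := tiling3_line_frieze eps_sig aT; have := tiling3_line_frieze eps_sig bT.
rewrite (tiling3_sign eps_sig aT) opprK => hF gF.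
have [s shift] := frieze_line1_shift gF hF.
exists (s *: unitv o0) => i.
by rewrite (tiling3_factor eps_sig bT) shift [RHS](tiling3_factor eps_sig aT) form3_unitv0.
Qed.

Lemma tiling3_of_sign (eps : 'M[int]_3) :
  is_signature eps -> eps o0 o1 * eps o0 o2 * eps o1 o2 = -1 ->
  is_SL2_tiling eps (frieze1 \o form3 eps).
Proof.
move=> eps_sig prod; have [_ [eps_pm _]] := eps_sig; have eps_sym := signature_sym eps_sig.
apply: frieze_line1_tiling frieze_line_frieze1 (form3D eps) _ _ => [k|k l];
  [case: (ord3P k) => -> | case: (ord3P k) => ->; case: (ord3P l) => -> //= _];
  rewrite ?(eps_sym o0 o1) ?(eps_sym o0 o2) ?(eps_sym o1 o2) /form3 /unitv !mxE /=;
  by move: prod; case: (eps_pm o0 o1 isT) (eps_pm o0 o2 isT) (eps_pm o1 o2 isT)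
    => -> [] -> [] ->; auto.
Qed.

Lemma tiling3_exists_iff (eps : 'M[int]_3) : is_signature eps ->
  (exists a, is_SL2_tiling eps a) <-> eps o0 o1 * eps o0 o2 * eps o1 o2 = -1.
Proof.
move=> eps_sig; split=> [[a aT]|prod]; first exact: tiling3_sign aT.
by exists (frieze1 \o form3 eps); exact: tiling3_of_sign.
Qed.

Definition sigmx (p q r : int) : 'M[int]_3 :=
  \matrix_(i, j) if i == j then -1 else [:: p; q; r]`_(i + j).-1.

Lemma sigmxE (eps : 'M[int]_3) : is_signature eps ->
  eps = sigmx (eps o0 o1) (eps o0 o2) (eps o1 o2).
Proof.
move=> eps_sig; have eps_sym := signature_sym eps_sig.
apply/matrixP => i j; rewrite mxE.
by case: (ord3P i) (ord3P j) => -> [] -> /=;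
  rewrite ?eps_sig.2.2 ?(eps_sym o0 o1) ?(eps_sym o0 o2) ?(eps_sym o1 o2).
Qed.

Lemma sigmx_signature (p q r : int) :
  p = 1 \/ p = -1 -> q = 1 \/ q = -1 -> r = 1 \/ r = -1 -> is_signature (sigmx p q r).
Proof.
move=> p_pm q_pm r_pm; split; [|split=> [k l|k]].
- by apply/matrixP => i j; rewrite !mxE eq_sym addnC.
- by rewrite mxE; case: (ord3P k) (ord3P l) => -> [] ->.
- by rewrite mxE eqxx.
Qed.

Lemma sigmx_tileable (p q r : int) :
  p = 1 \/ p = -1 -> q = 1 \/ q = -1 -> r = 1 \/ r = -1 -> p * q * r = -1 ->
  is_signature (sigmx p q r) /\ exists a, is_SL2_tiling (sigmx p q r) a.
Proof.
move=> p_pm q_pm r_pm prod; have sig := sigmx_signature p_pm q_pm r_pm.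
by split=> //; apply/(tiling3_exists_iff sig); rewrite !mxE.
Qed.

Definition tileable_signatures3 : seq 'M[int]_3 :=
  [:: sigmx (-1) (-1) (-1); sigmx (-1) 1 1; sigmx 1 (-1) 1; sigmx 1 1 (-1)].

Lemma tileable_signatures3_uniq : uniq tileable_signatures3.
Proof.
apply: (@map_uniq _ _ (fun M : 'M[int]_3 => (M o0 o1, M o0 o2, M o1 o2))).
by rewrite /= !mxE.
Qed.

Lemma tileable_signatures3P (eps : 'M[int]_3) :
  eps \in tileable_signatures3 <-> is_signature eps /\ exists a, is_SL2_tiling eps a.
Proof.
split=> [|[eps_sig /(tiling3_exists_iff eps_sig)]].
  by rewrite !inE => /or4P[] /eqP ->; apply: sigmx_tileable; auto.
have [_ [eps_pm _]] := eps_sig; rewrite [X in X \in _](sigmxE eps_sig) !inE.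
by case: (eps_pm o0 o1 isT) (eps_pm o0 o2 isT) (eps_pm o1 o2 isT) => -> [] -> [] ->;
  rewrite ?eqxx ?orbT.
Qed.

Theorem corollary2p5 :
  (forall eps : 'M[int]_3, is_signature eps ->
     ((exists a, is_SL2_tiling eps a) <->
      eps (inord 0) (inord 1) * eps (inord 0) (inord 2) * eps (inord 1) (inord 2) = -1))
  /\
  (exists s : seq 'M[int]_3, uniq s /\ size s = 4%N /\
     forall eps : 'M[int]_3,
       eps \in s <-> (is_signature eps /\ exists a, is_SL2_tiling eps a))
  /\
  (forall eps : 'M[int]_3, is_signature eps ->
     eps (inord 0) (inord 1) * eps (inord 0) (inord 2) * eps (inord 1) (inord 2) = -1 ->
     forall a b : 'rV[int]_3 -> int,
       is_SL2_tiling eps a -> is_SL2_tiling eps b ->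
       exists t : 'rV[int]_3, forall i, b i = a (i + t)).
Proof.
rewrite (inord_val o0) (inord_val o1) (inord_val o2).
split; [exact: tiling3_exists_iff | split].
- exists tileable_signatures3; split; first exact: tileable_signatures3_uniq.
  by split=> //; exact: tileable_signatures3P.
- by move=> eps eps_sig _ a b; exact: tiling3_unique.
Qed.
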